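(* Let $\mathcal{G}$ and $\mathcal{F}$ be quantum isomorphic quantum graphs. Then for every $r\geq1$ the quantum graphs $\mu_{r-1}(\mathcal{G})$ and $\mu_{r-1}(\mathcal{F})$ are quantum isomorphic.
   Context: Quantum graph $\mathcal{G}=(C(\mathcal{G}),\psi_{\mathcal{G}},A_{\mathcal{G}})$: $C(\mathcal{G})$ finite-dimensional C*-algebra, $\psi_{\mathcal{G}}$ a faithful state with $mm^*=\delta_{\mathcal{G}}^2\mathrm{id}$ on the GNS space $L^2(\mathcal{G})$ ($m$ the multiplication, $\delta_{\mathcal{G}}>0$), $A_{\mathcal{G}}$ self-adjoint on $L^2(\mathcal{G})$ with $m(A\otimes A)m^*=A$ and $A=(\mathrm{id}\otimes\eta^*m)(\mathrm{id}\otimes A\otimes\mathrm{id})(m^*\eta\otimes\mathrm{id})$, $\eta$ the unit map. Quantum isomorphism: choosing orthonormal bases $\{e_j\}$ of $L^2(\mathcal{G})$, $\{f_i\}$ of $L^2(\mathcal{F})$, $\mathcal{G}$ and $\mathcal{F}$ are quantum isomorphic iff the universal $*$-algebra generated by entries $p_{ij}$ of a unitary matrix subject to relations making $e_j\mapsto\sum_i f_i\otimes p_{ij}$ a unital $*$-homomorphism $C(\mathcal{G})\to C(\mathcal{F})\otimes(\cdot)$ with $\rho A_{\mathcal{G}}=(A_{\mathcal{F}}\otimes\mathrm{id})\rho$ is non-zero. Quantum Mycielskian of order $r-1$ ($r\ge2$): $C(\mu_{r-1}(\mathcal{G}))=\mathbb{C}\oplus\bigoplus_{k=1}^rC(\mathcal{G})$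 with state $\psi(\lambda,x_1,\dots,x_r)=\frac{1}{1+r\delta_{\mathcal{G}}^2}\bigl(\lambda+\delta_{\mathcal{G}}^2\sum_k\psi_{\mathcal{G}}(x_k)\bigr)$ and adjacency operator $A(\lambda,x_1,\dots,x_r)=(y_0,y_1,\dots,y_r)$ where $y_0=\delta_{\mathcal{G}}^2\psi_{\mathcal{G}}(x_r)$, $y_1=A_{\mathcal{G}}(x_1+x_2)$, $y_k=A_{\mathcal{G}}(x_{k-1}+x_{k+1})$ for $2\le k\le r-1$, $y_r=\lambda\mathbf{1}+A_{\mathcal{G}}x_{r-1}$ (for $r=2$: $y_1=A_{\mathcal{G}}(x_1+x_2)$, $y_2=\lambda\mathbf 1+A_{\mathcal{G}}x_1$). For $r=1$, $\mu_0(\mathcal{G})=\mathcal{G}$. *)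

(* Quantum graphs are encoded in coordinates with respect to
   an orthonormal basis of the GNS space. *)
From mathcomp Require Import all_boot all_order all_algebra.
From mathcomp Require Import complex.
From mathcomp Require Import reals Rstruct.
Set Implicit Arguments. Unset Strict Implicit. Unset Printing Implicit Defensive.
Import Order.TTheory GRing.Theory Num.Theory.
Local Open Scope ring_scope.

Definition C : numClosedFieldType := Rdefinitions.R[i].

(* A (finite-dimensional) algebra with an orthonormal basis {e_i | i : qidx}
   of its GNS space, given by coordinates:
     qmul k i j = <e_k, e_i e_j>       (structure constants of m)
     qstar k i  = <e_k, e_i^*>         (the involution)
     qunit k    = <e_k, 1>             (the unit, i.e. eta(1))
     qadj k j   = <e_k, A e_j>         (matrix of the adjacency operator)
     qdelta     = delta                                                     *)
Record qgraph := QGraph {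
  qidx : finType;
  qmul : qidx -> qidx -> qidx -> C;
  qstar : qidx -> qidx -> C;
  qunit : qidx -> C;
  qadj : qidx -> qidx -> C;
  qdelta : C }.
Arguments qmul : clear implicits.
Arguments qstar : clear implicits.
Arguments qunit : clear implicits.
Arguments qadj : clear implicits.

Definition is_qgraph (G : qgraph) : Prop :=
  let c := qmul G in let s := qstar G in let u := qunit G in
  let A := qadj G in let d := qdelta G in
      (forall i j l q, \sum_p c p i j * c q p l = \sum_p c q i p * c p j l) /\
      (forall i k, \sum_j u j * c k j i = (k == i)%:R)
      /\ (forall i k, \sum_j u j * c k i j = (k == i)%:R) /\
      (* the antilinear map e_i |-> e_i^* is an involution (star (star x) = x) ... *)
      (forall i k, \sum_j (s j i)^* * s k j = (k == i)%:R) /\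
      (* ... and anti-multiplicative: (e_i e_j)^* = e_j^* e_i^* *)
      (forall i j l, \sum_k (c k i j)^* * s l k
                     = \sum_a \sum_b s a j * s b i * c l a b) /\
      (* psi(x) := <1, x> is a state (psi(1) = 1) and the GNS inner product
         psi(x^* y) coincides with the given one, i.e. (e_i) is orthonormal *)
      (\sum_k (u k)^* * u k = 1)
      /\ (forall i j, \sum_k (u k)^* * (\sum_a s a i * c k a j) = (i == j)%:R) /\
      (* delta-form: delta > 0 and m m^* = delta^2 id *)
      (0 < d) /\ (forall k l, \sum_i \sum_j c k i j * (c l i j)^* = d ^+ 2 * (k == l)%:R) /\
      (* adjacency operator: self-adjoint, m (A (x) A) m^* = A,
         A = (id (x) eta^* m)(id (x) A (x) id)(m^* eta (x) id) *)
      [/\ (forall k j, (A j k)^* = A k j),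
          (forall k l, \sum_i \sum_j \sum_i' \sum_j'
                         c k i j * A i i' * A j j' * (c l i' j')^* = A k l) &
          (forall i q, \sum_j \sum_p \sum_l \sum_k
                         (c l i j)^* * u l * A p j * (u k)^* * c k p q = A i q)].

Definition is_star (P : algType C) (star : P -> P) : Prop :=
  [/\ forall x y, star (x + y) = star x + star y,
      forall (a : C) x, star (a *: x) = a^* *: star x,
      forall x y, star (x * y) = star y * star x &
      forall x, star (star x) = x].

(* Quantum isomorphism: the universal *-algebra generated by the entries p_ij
   of a unitary matrix such that rho(e_j) = sum_i f_i (x) p_ij is a unital
   *-homomorphism intertwining the adjacency operators is non-zero; i.e.
   there is a non-zero (1 != 0, built into algType) unital *-algebra P
   containing such elements p_ij. *)
Definition qiso (G F : qgraph) : Prop :=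
  exists (P : algType C) (star : P -> P) (p : qidx F -> qidx G -> P),
  is_star star /\
      (forall i k, \sum_j p i j * star (p k j) = (i == k)%:R)
      /\ (forall j l, \sum_i star (p i j) * p i l = (j == l)%:R) /\
      (* rho multiplicative: rho(e_a e_b) = rho(e_a) rho(e_b) *)
      (forall l a b, \sum_k qmul G k a b *: p l k
                     = \sum_i \sum_j qmul F l i j *: (p i a * p j b)) /\
      (* rho is star-preserving: rho(star e_a) = star (rho e_a) *)
      (forall l a, \sum_k qstar G k a *: p l k = \sum_i qstar F l i *: star (p i a)) /\
      (* rho unital: rho(1) = 1 (x) 1 *)
      (forall l, \sum_k qunit G k *: p l k = (qunit F l)%:A) /\
      (* rho A_G = (A_F (x) id) rho *)
      (forall l j, \sum_k qadj G k j *: p l k = \sum_i qadj F l i *: p i j).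

(* Which x_k (0-indexed slot k) enter y_k' (0-indexed slot k') through A_G,
   for r >= 2:  y_1 = A(x_1 + x_2), y_k = A(x_{k-1} + x_{k+1}), y_r = ... + A x_{r-1}. *)
Definition myc_link (r k' k : nat) : bool :=
  if k' == 0%N then (k <= 1)%N
  else if k' == r.-1 then k == r.-2
  else (k == k'.-1) || (k == k'.+1).

(* The quantum Mycielskian of order r-1 (r >= 2), written in the orthonormal
   basis  E_0 = (sqrt N, 0),  E_(k,j) = (0, .., (sqrt N / delta) e_j at slot k, ..)
   of its GNS space, where N = 1 + r delta^2 (index None is E_0). *)
Section Myc.
Variables (r : nat) (G : qgraph).
Let I := qidx G.
Let d := qdelta G.
Let N : C := 1 + r%:R * d ^+ 2.
Let a : C := sqrtC N.
Let b : C := a / d.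

Definition myc_idx : finType := option ('I_r * I).

Definition myc_mul (k i j : myc_idx) : C :=
  match k, i, j with
  | None, None, None => a
  | Some (k0, l), Some (k1, i'), Some (k2, j') =>
      if (k1 == k0) && (k2 == k0) then b * qmul G l i' j' else 0
  | _, _, _ => 0
  end.

Definition myc_star (k i : myc_idx) : C :=
  match k, i with
  | None, None => 1
  | Some (k0, l), Some (k1, j) => if k0 == k1 then qstar G l j else 0
  | _, _ => 0
  end.

Definition myc_unit (k : myc_idx) : C :=
  match k with
  | None => a^-1
  | Some (_, l) => qunit G l / b
  end.

Definition myc_adj (k j : myc_idx) : C :=
  match k, j with
  | None, None => 0
  | Some (k', l), None => if (k' : nat) == r.-1 then a * qunit G l / b else 0
  | None, Some (k, j') => if (k : nat) == r.-1 then d ^+ 2 * b * (qunit G j')^* / a else 0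
  | Some (k', l), Some (k, j') => if myc_link r k' k then qadj G l j' else 0
  end.

Definition myc : qgraph :=
  @QGraph myc_idx myc_mul myc_star myc_unit myc_adj a.
End Myc.

Definition qmu (n : nat) (G : qgraph) : qgraph :=
  match n with
  | 0%N => G
  | n'.+1 => myc n'.+2 G
  end.

(* A quantum isomorphism G ~ F is witnessed by a unitary p = (p_ij) with
   entries in a *-algebra, and the structure constants of the Mycielskian of
   G are built from those of G and from delta_G alone.  Hence the block
   diagonal unitary 1 (+) p (+) ... (+) p, acting on the bases E_0, E_(k,j) of
   the two Mycielskians, witnesses a quantum isomorphism between them as soon
   as delta_G = delta_F and p is compatible with the unit on both sides.  The
   first follows by applying rho to sum_a e_a e_a^* = delta_G^2 1, which gives
   delta_G^2 1 = delta_F^2 1; the second, sum_l <f_l, 1>^* p_la = <e_a, 1>^* 1,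
   is the adjoint of rho(1) = 1 under the unitarity of p.  It is needed for the
   edges between the extra vertex and the last copy of G. *)

From mathcomp Require Import all_boot all_order all_algebra ring.
Import Order.TTheory GRing.Theory Num.Theory.
Set Implicit Arguments. Unset Strict Implicit.
Local Open Scope ring_scope.

Lemma big_mul_eq_natr (T : finType) (R : pzSemiRingType) (f : T -> R) (l : T) :
  \sum_n f n * (n == l)%:R = f l.
Proof. by rewrite (bigD1 l) //= eqxx mulr1 big1 ?addr0 // => n /negbTE->; rewrite mulr0. Qed.

Lemma big_exchange3 (I : finType) (R : Type) (idx : R) (op : Monoid.com_law idx)
    (F : I -> I -> I -> R) :
  \big[op/idx]_m \big[op/idx]_a \big[op/idx]_b F m a b
    = \big[op/idx]_a \big[op/idx]_b \big[op/idx]_m F m a b.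
Proof. by rewrite exchange_big; apply: eq_bigr => a _; rewrite exchange_big. Qed.

Section StructureConstants.
Variables (K : numClosedFieldType) (I : finType).
Variables (c : I -> I -> I -> K) (s : I -> I -> K) (u : I -> K) (d : K).
Hypothesis qmulA : forall i j l q, \sum_p c p i j * c q p l = \sum_p c q i p * c p j l.
Hypothesis qmulr1 : forall i k, \sum_j u j * c k i j = (k == i)%:R.
Hypothesis qstarM : forall i j l,
  \sum_k (c k i j)^* * s l k = \sum_a \sum_b s a j * s b i * c l a b.
Hypothesis qorth : forall i j, \sum_k (u k)^* * (\sum_a s a i * c k a j) = (i == j)%:R.
Hypothesis qmmT : forall k l, \sum_i \sum_j c k i j * (c l i j)^* = d ^+ 2 * (k == l)%:R.

(* <e_l, e_i e_j>^* = psi((e_i e_j)^* e_l) = psi(e_j^* (e_i^* e_l)) = <e_j, e_i^* e_l> *)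
Lemma qmul_conj l i j : (c l i j)^* = \sum_b s b i * c j b l.
Proof.
transitivity (\sum_n (c n i j)^* * (\sum_k (u k)^* * \sum_m s m n * c k m l)).
  by rewrite -(big_mul_eq_natr (fun n => (c n i j)^*) l); apply: eq_bigr => n _; rewrite qorth.
transitivity (\sum_k (u k)^* * \sum_m c k m l * (\sum_n (c n i j)^* * s m n)).
  under eq_bigr => n _ do (rewrite mulr_sumr; under eq_bigr => k _ do rewrite !mulr_sumr).
  rewrite exchange_big; apply: eq_bigr => k _.
  rewrite mulr_sumr exchange_big; apply: eq_bigr => m _.
  by rewrite !mulr_sumr; apply: eq_bigr => n _ /=; ring.
under eq_bigr => k _ do under eq_bigr => m _ do rewrite qstarM.
transitivity (\sum_m (\sum_b s b i * c m b l) * (\sum_k (u k)^* * \sum_a s a j * c k a m)).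
  transitivity (\sum_k \sum_a \sum_b (u k)^* * s a j * s b i * \sum_m c m a b * c k m l).
    apply: eq_bigr => k _.
    under eq_bigr => m _ do (rewrite mulr_sumr; under eq_bigr => a _ do rewrite mulr_sumr).
    rewrite mulr_sumr /=.
    under eq_bigr => m _ do rewrite mulr_sumr.
    under eq_bigr => m _ do under eq_bigr => a _ do rewrite mulr_sumr.
    rewrite big_exchange3; apply: eq_bigr => a _; apply: eq_bigr => b _.
    by rewrite mulr_sumr; apply: eq_bigr => m _ /=; ring.
  under eq_bigr => k _ do under eq_bigr => a _ do under eq_bigr => b _ do rewrite qmulA.
  under [in RHS]eq_bigr => m _ do rewrite mulr_suml.
  under [in RHS]eq_bigr => m _ do under eq_bigr => b _ do rewrite mulr_sumr.
  under [in RHS]eq_bigr => m _ do under eq_bigr => b _ do under eq_bigr => k _ do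
    rewrite mulrA mulr_sumr.
  under [in RHS]eq_bigr => m _ do rewrite big_exchange3.
  apply/esym; rewrite big_exchange3; apply: eq_bigr => k _; apply: eq_bigr => a _.
  rewrite exchange_big; apply: eq_bigr => b _; rewrite mulr_sumr; apply: eq_bigr => p _ /=.
  ring.
under eq_bigr => m _ do rewrite qorth.
by under eq_bigr => m _ do rewrite eq_sym; rewrite big_mul_eq_natr.
Qed.

(* Coordinates of sum_a e_a e_a^* = d^2 1. *)
Lemma sum_qstar_qmul k : \sum_a \sum_j s j a * c k a j = d ^+ 2 * u k.
Proof.
transitivity (\sum_i \sum_j \sum_b c k i j * s b i * \sum_l u l * c j b l).
  apply: eq_bigr => a _; apply: eq_bigr => j _.
  under eq_bigr => b _ do rewrite qmulr1 eq_sym.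
  by rewrite big_mul_eq_natr mulrC.
transitivity (\sum_l u l * (d ^+ 2 * (k == l)%:R)); last first.
  under eq_bigr => l _ do rewrite eq_sym mulrCA.
  by rewrite -mulr_sumr big_mul_eq_natr.
under [in RHS]eq_bigr => l _ do rewrite -qmmT.
under [in RHS]eq_bigr => l _ do under eq_bigr => i _ do under eq_bigr => j _ do
  rewrite qmul_conj mulr_sumr.
under [in RHS]eq_bigr => l _ do rewrite mulr_sumr.
under [in RHS]eq_bigr => l _ do under eq_bigr => i _ do rewrite mulr_sumr.
under [in RHS]eq_bigr => l _ do under eq_bigr => i _ do under eq_bigr => j _ do
  rewrite mulr_sumr.
rewrite [in RHS]big_exchange3; apply: eq_bigr => i _; apply: eq_bigr => j _.
rewrite exchange_big; apply: eq_bigr => b _; rewrite mulr_sumr; apply: eq_bigr => l _ /=.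
ring.
Qed.

End StructureConstants.

Lemma qunit_neq0 (G : qgraph) : is_qgraph G -> exists l, qunit G l != 0.
Proof.
case=> _ [_ [_ [_ [_ [psi1 _]]]]].
have [l ul_neq0|u0] := pickP (fun l => qunit G l != 0); first by exists l.
move: psi1; rewrite big1 => [/eqP|l _]; first by rewrite eq_sym oner_eq0.
by move/negbFE/eqP: (u0 l) ->; rewrite mulr0.
Qed.

Lemma qgraph_sum_qstar_qmul (G : qgraph) : is_qgraph G ->
  forall k, \sum_a \sum_j qstar G j a * qmul G k a j = qdelta G ^+ 2 * qunit G k.
Proof.
case=> qmulA [_ [qmulr1 [_ [qstarM [_ [qorth [_ [qmmT _]]]]]]]].
exact: sum_qstar_qmul.
Qed.

Lemma big_scale_eq_natr (T : finType) (P : algType C) (f : T -> C) (i : T) :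
  \sum_t f t *: ((i == t)%:R : P) = (f i)%:A.
Proof.
rewrite (bigD1 i) //= eqxx big1 ?addr0 // => t /negbTE.
by rewrite eq_sym => ->; rewrite scaler0.
Qed.

Lemma scalerA_inj (P : algType C) (x y : C) : x%:A = y%:A :> P -> x = y.
Proof. by move/eqP; rewrite -subr_eq0 -scalerBl scaler_eq0 oner_eq0 orbF subr_eq0 => /eqP. Qed.

Section StarAlgebra.
Variables (P : algType C) (star : P -> P).
Hypothesis starP : is_star star.

Lemma star0 : star 0 = 0.
Proof. by case: starP => _ starZ _ _; have := starZ 0 0; rewrite scale0r conjC0 scale0r. Qed.

Lemma star1 : star 1 = 1.
Proof.
case: starP => _ _ starM starK; apply/esym.
by have := starM (star 1) 1; rewrite mulr1 starK mulr1.
Qed.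

Lemma star_sum (T : finType) (f : T -> P) : star (\sum_t f t) = \sum_t star (f t).
Proof. by case: starP => starD _ _ _; apply: (big_morph star starD star0). Qed.

End StarAlgebra.

Lemma big_myc_idx (r : nat) (T : finType) (V : nmodType) (f : option ('I_r * T) -> V) :
  \sum_x f x = f None + \sum_k \sum_i f (Some (k, i)).
Proof.
rewrite (bigD1 None) //= pair_bigA (reindex_omap Some id) //=; last by case.
by congr (_ + _); apply: eq_big => [[k i]|[k i] _]; rewrite ?eqxx.
Qed.

Section BlockUnitary.
Variables (r : nat) (IG IF : finType) (P : algType C) (p : IF -> IG -> P).

Definition mycq (x : option ('I_r * IF)) (y : option ('I_r * IG)) : P :=
  match x, y with
  | None, None => 1
  | Some (k, i), Some (k', j) => if k == k' then p i j else 0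
  | _, _ => 0
  end.

Lemma mycq_sumr (V : nmodType) (h : option ('I_r * IG) -> P -> V) x :
    (forall y, h y 0 = 0) ->
  \sum_y h y (mycq x y) =
    if x is Some (k, i) then \sum_j h (Some (k, j)) (p i j) else h None 1.
Proof.
move=> h0; rewrite big_myc_idx; case: x => [[k i]|] /=; last first.
  by rewrite big1 ?addr0 // => k _; apply: big1.
rewrite h0 add0r (bigD1 k) //= eqxx [X in _ + X]big1 ?addr0 // => k' /negbTE k'k.
by apply: big1 => j _; rewrite eq_sym k'k h0.
Qed.

Lemma mycq_suml (V : nmodType) (h : option ('I_r * IF) -> P -> V) y :
    (forall x, h x 0 = 0) ->
  \sum_x h x (mycq x y) =
    if y is Some (k, j) then \sum_i h (Some (k, i)) (p i j) else h None 1.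
Proof.
move=> h0; rewrite big_myc_idx; case: y => [[k j]|] /=; last first.
  by rewrite big1 ?addr0 // => k _; apply: big1.
rewrite h0 add0r (bigD1 k) //= eqxx [X in _ + X]big1 ?addr0 // => k' /negbTE k'k.
by apply: big1 => i _; rewrite k'k h0.
Qed.

Lemma mycq_sumZr (g : option ('I_r * IG) -> C) x :
  \sum_y g y *: mycq x y =
    if x is Some (k, i) then \sum_j g (Some (k, j)) *: p i j else (g None)%:A.
Proof. by rewrite (@mycq_sumr _ (fun y q => g y *: q)) // => y; rewrite scaler0. Qed.

Lemma mycq_sumZl (g : option ('I_r * IF) -> C) y :
  \sum_x g x *: mycq x y =
    if y is Some (k, j) then \sum_i g (Some (k, i)) *: p i j else (g None)%:A.
Proof. by rewrite (@mycq_suml _ (fun x q => g x *: q)) // => x; rewrite scaler0. Qed.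

Lemma mycq_sum_mul (g : option ('I_r * IF) -> option ('I_r * IF) -> C) a b :
  \sum_x \sum_y g x y *: (mycq x a * mycq y b) =
    match a, b with
    | Some (ka, a'), Some (kb, b') =>
        \sum_i \sum_j g (Some (ka, i)) (Some (kb, j)) *: (p i a' * p j b')
    | Some (ka, a'), None => \sum_i g (Some (ka, i)) None *: p i a'
    | None, Some (kb, b') => \sum_j g None (Some (kb, j)) *: p j b'
    | None, None => (g None None)%:A
    end.
Proof.
rewrite (@mycq_suml _ (fun x q => \sum_y g x y *: (q * mycq y b))); last first.
  by move=> x; apply: big1 => y _; rewrite mul0r scaler0.
have inner x q : \sum_y g x y *: (q * mycq y b) =
    if b is Some (kb, b') then \sum_j g x (Some (kb, j)) *: (q * p j b') else g x None *: q.
  by rewrite (@mycq_suml _ (fun y q' => g x y *: (q * q'))) ?mulr1 // => y; rewrite mulr0 scaler0.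
case: a => [[ka a']|]; case: b inner => [[kb b']|] inner.
- by apply: eq_bigr => i _; rewrite inner.
- by apply: eq_bigr => i _; rewrite inner.
- by rewrite inner; apply: eq_bigr => j _; rewrite mul1r.
- by rewrite inner.
Qed.

End BlockUnitary.

Arguments mycq_sumr {r IG IF P} p {V} h x.
Arguments mycq_suml {r IG IF P} p {V} h y.

Ltac sums0 := by do ?[rewrite scale0r // | rewrite big1 // => *].

Section Intertwiner.
Variables (G F : qgraph) (P : algType C) (star : P -> P) (p : qidx F -> qidx G -> P).
Hypotheses (hG : is_qgraph G) (hF : is_qgraph F) (starP : is_star star).
Hypothesis p_unitaryr : forall i k, \sum_j p i j * star (p k j) = (i == k)%:R.
Hypothesis p_unitaryl : forall j l, \sum_i star (p i j) * p i l = (j == l)%:R.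
Hypothesis p_mul : forall l a b,
  \sum_k qmul G k a b *: p l k = \sum_i \sum_j qmul F l i j *: (p i a * p j b).
Hypothesis p_star : forall l a, \sum_k qstar G k a *: p l k = \sum_i qstar F l i *: star (p i a).
Hypothesis p_unit : forall l, \sum_k qunit G k *: p l k = (qunit F l)%:A.
Hypothesis p_adj : forall l j, \sum_k qadj G k j *: p l k = \sum_i qadj F l i *: p i j.

Lemma qiso_unit_conj a : \sum_l (qunit F l)^* *: p l a = ((qunit G a)^*)%:A.
Proof.
have unit_star : \sum_l qunit F l *: star (p l a) = (qunit G a)%:A.
  transitivity (\sum_l star (p l a) * \sum_k qunit G k *: p l k).
    by apply: eq_bigr => l _; rewrite p_unit -scalerAr mulr1.
  under eq_bigr => l _ do rewrite mulr_sumr.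
  rewrite exchange_big /= -big_scale_eq_natr; apply: eq_bigr => k _.
  by rewrite -p_unitaryl scaler_sumr; apply: eq_bigr => l _; rewrite scalerAr.
have [_ starZ _ starK] := starP.
have := congr1 star unit_star; rewrite star_sum // starZ star1 // => <-.
by apply: eq_bigr => l _; rewrite starZ starK.
Qed.

(* Apply rho to sum_a e_a e_a^* = delta_G^2 1, then use the unitarity of p. *)
Lemma qiso_delta_sqr_unit l :
  ((qdelta G ^+ 2 * qunit F l)%:A : P) = (qdelta F ^+ 2 * qunit F l)%:A.
Proof.
transitivity (\sum_a \sum_j qstar G j a *:
              \sum_i \sum_i' qmul F l i i' *: (p i a * p i' j)).
  rewrite -scalerA -p_unit scaler_sumr.
  under eq_bigr => k _ do rewrite scalerA -(qgraph_sum_qstar_qmul hG) scaler_suml.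
  under eq_bigr => k _ do under eq_bigr => a _ do rewrite scaler_suml.
  rewrite exchange_big; apply: eq_bigr => a _; rewrite exchange_big; apply: eq_bigr => j _.
  by rewrite -p_mul scaler_sumr; apply: eq_bigr => k _; rewrite scalerA.
transitivity (\sum_a \sum_i \sum_i' qmul F l i i' *: (p i a * \sum_j qstar G j a *: p i' j)).
  apply: eq_bigr => a _.
  under eq_bigr => j _ do rewrite scaler_sumr.
  under eq_bigr => j _ do under eq_bigr => i _ do rewrite scaler_sumr.
  rewrite exchange_big; apply: eq_bigr => i _; rewrite exchange_big; apply: eq_bigr => i' _.
  rewrite mulr_sumr scaler_sumr; apply: eq_bigr => j _.
  by rewrite !scalerA -!scalerAr scalerA mulrC.
under eq_bigr => a _ do under eq_bigr => i _ do under eq_bigr => i' _ do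
  rewrite p_star mulr_sumr scaler_sumr.
rewrite exchange_big.
under eq_bigr => i _ do rewrite exchange_big.
transitivity (\sum_i \sum_i' \sum_t (qmul F l i i' * qstar F i' t) *: ((i == t)%:R : P)).
  apply: eq_bigr => i _; apply: eq_bigr => i' _.
  rewrite exchange_big; apply: eq_bigr => t _.
  by rewrite -p_unitaryr scaler_sumr; apply: eq_bigr => a _; rewrite -scalerAr scalerA.
under eq_bigr => i _ do under eq_bigr => i' _ do rewrite big_scale_eq_natr.
under eq_bigr => i _ do rewrite -scaler_suml.
rewrite -scaler_suml -(qgraph_sum_qstar_qmul hF); congr (_ *: _).
by apply: eq_bigr => a _; apply: eq_bigr => j _; rewrite mulrC.
Qed.

Lemma qiso_delta : qdelta G = qdelta F.
Proof.
have [l ul_neq0] := qunit_neq0 hF.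
have /eqP := mulIf ul_neq0 (scalerA_inj (qiso_delta_sqr_unit l)).
have [_ [_ [_ [_ [_ [_ [_ [dG_gt0 _]]]]]]]] := hG.
have [_ [_ [_ [_ [_ [_ [_ [dF_gt0 _]]]]]]]] := hF.
by rewrite eqrXn2 ?ltW // => /eqP.
Qed.

Variable r : nat.
Local Notation q := (@mycq r _ _ _ p).

Lemma myc_unitaryr x z : \sum_y q x y * star (q z y) = (x == z)%:R.
Proof.
rewrite (mycq_sumr p (fun y v => v * star (q z y))) => [|y]; last by rewrite mul0r.
case: x z => [[k i]|] [[k' i']|] /=; rewrite ?(star0 starP) ?(star1 starP) ?mulr0 ?mulr1 //.
- rewrite (inj_eq Some_inj) xpair_eqE.
  have [_|_] := eqVneq k' k; first exact: p_unitaryr.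
  by rewrite big1 // => j _; rewrite (star0 starP) mulr0.
- by rewrite big1 // => j _; rewrite mulr0.
Qed.

Lemma myc_unitaryl y z : \sum_x star (q x y) * q x z = (y == z)%:R.
Proof.
rewrite (mycq_suml p (fun x v => star v * q x z)) => [|x]; last by rewrite (star0 starP) mul0r.
case: y z => [[k j]|] [[k' j']|] /=; rewrite ?(star0 starP) ?(star1 starP) ?mulr0 ?mul1r //.
- rewrite (inj_eq Some_inj) xpair_eqE.
  have [_|_] := eqVneq k k'; first exact: p_unitaryl.
  by rewrite big1 // => i _; rewrite mulr0.
- by rewrite big1 // => i _; rewrite mulr0.
Qed.

Lemma myc_intertwines_mul (l : qidx (myc r F)) (a b : qidx (myc r G)) :
  \sum_k myc_mul k a b *: q l k = \sum_i \sum_j myc_mul l i j *: (q i a * q j b).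
Proof.
rewrite mycq_sumZr mycq_sum_mul.
case: l a b => [[k0 l]|] [[ka a]|] [[kb b]|] /=; rewrite ?qiso_delta //; try sums0.
case: (_ && _); last sums0.
under eq_bigr => j _ do rewrite -scalerA.
rewrite -scaler_sumr p_mul scaler_sumr.
by apply: eq_bigr => i _; rewrite scaler_sumr; apply: eq_bigr => j _; rewrite scalerA.
Qed.

Lemma myc_intertwines_star (l : qidx (myc r F)) (a : qidx (myc r G)) :
  \sum_k myc_star k a *: q l k = \sum_i myc_star l i *: star (q i a).
Proof.
rewrite mycq_sumZr (mycq_suml p (fun i v => myc_star l i *: star v)) => [|i]; last first.
  by rewrite (star0 starP) scaler0.
case: l a => [[k0 l]|] [[ka a]|] /=; rewrite ?(star1 starP) //; try sums0.
by case: (k0 == ka); [exact: p_star | sums0].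
Qed.

Lemma myc_intertwines_unit (l : qidx (myc r F)) :
  \sum_k myc_unit k *: q l k = (myc_unit l)%:A.
Proof.
rewrite mycq_sumZr; case: l => [[k0 l]|] /=; rewrite qiso_delta //.
under eq_bigr => j _ do rewrite mulrC -scalerA.
by rewrite -scaler_sumr p_unit scalerA mulrC.
Qed.

Lemma myc_intertwines_adj (l : qidx (myc r F)) (j : qidx (myc r G)) :
  \sum_k myc_adj k j *: q l k = \sum_i myc_adj l i *: q i j.
Proof.
rewrite mycq_sumZr mycq_sumZl.
case: l j => [[k0 l]|] [[k1 j]|] /=; rewrite ?qiso_delta ?scale0r //.
- by case: myc_link; [exact: p_adj | sums0].
- case: (_ == _); last sums0.
  under eq_bigr => m _ do rewrite mulrAC -scalerA.
  by rewrite -scaler_sumr p_unit scalerA mulrAC.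
- case: (_ == _); last sums0.
  under [RHS]eq_bigr => i _ do rewrite mulrAC -scalerA.
  by rewrite -scaler_sumr qiso_unit_conj scalerA mulrAC.
Qed.

Lemma qiso_myc : qiso (myc r G) (myc r F).
Proof.
exists P, star, q; split; first exact: starP.
split; first exact: myc_unitaryr.
split; first exact: myc_unitaryl.
split; first exact: myc_intertwines_mul.
split; first exact: myc_intertwines_star.
split; first exact: myc_intertwines_unit.
exact: myc_intertwines_adj.
Qed.

End Intertwiner.

Theorem mainTheorem2 (G F : qgraph) :
  is_qgraph G -> is_qgraph F -> qiso G F ->
  forall r : nat, (1 <= r)%N -> qiso (qmu r.-1 G) (qmu r.-1 F).
Proof.
move=> hG hF hiso [|[|r]] // _.
case: hiso => P [star [p [starP [pr [pl [pm [ps [pu pa]]]]]]]].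
exact: (qiso_myc hG hF starP pr pl pm ps pu pa).
Qed.
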